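(* Let $k=2\kappa+1$ with $\kappa\in\{0,1,2,\dots\}$ and let $v\in C_p^{k+1}$. Then there exists a constant $C>0$, independent of $h$, such that for every $N\ge1$ (with $h=1/N$) $$\max_{1\le i\le N}|(\pi_1v-v)(x_i)|\le C\,h^{k+1}\,\|v^{(k+1)}\|_\infty .$$
   Context: $C_p$ is the space of continuous $1$-periodic real functions, and $C_p^m$ the set of $f\in C_p$ with $f^{(j)}\in C_p$ for $j=1,\dots,m$; $\|\cdot\|_\infty$ is the sup norm. For $N\ge1$, $h=1/N$, $x_i=ih$. $\mathcal{V}_h^k=\{\phi\in C_p:\ \phi|_{[x_{i-1},x_i]}\text{ is a polynomial of degree}\le k,\ i=1,\dots,N\}$. Let $\mathcal{S}_h^2=\{\phi\in\mathcal{V}_h^k:\phi(x_i)=0\ \text{for all } i\}$, $\mathcal{S}_h^1$ its $L^2(0,1)$-orthogonal complement in $\mathcal{V}_h^k$, and $\pi_1$ the $L^2(0,1)$-orthogonal projection onto $\mathcal{S}_h^1$. *)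

From Stdlib Require Import Reals ClassicalEpsilon.
From Coquelicot Require Import Coquelicot.
Open Scope R_scope.

Definition Cp (f : R -> R) : Prop :=
  (forall x, continuous f x) /\ (forall x, f (x + 1) = f x).

Definition Cpm (m : nat) (f : R -> R) : Prop :=
  Cp f /\
  forall j : nat, (1 <= j <= m)%nat ->
    (forall x, ex_derive_n f j x) /\ Cp (Derive_n f j).

Definition node (N i : nat) : R := INR i / INR N.

Definition Vhk (N k : nat) (phi : R -> R) : Prop :=
  Cp phi /\
  forall i : nat, (1 <= i <= N)%nat ->
    exists c : nat -> R, forall x, node N (i - 1) <= x <= node N i ->
      phi x = sum_f_R0 (fun j => c j * x ^ j) k.

Definition ip (f g : R -> R) : R := RInt (fun x => f x * g x) 0 1.

Definition Sh2 (N k : nat) (phi : R -> R) : Prop :=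
  Vhk N k phi /\ forall i : nat, phi (node N i) = 0.

Definition Sh1 (N k : nat) (psi : R -> R) : Prop :=
  Vhk N k psi /\ forall phi, Sh2 N k phi -> ip psi phi = 0.

Definition is_pi1 (N k : nat) (v w : R -> R) : Prop :=
  Sh1 N k w /\ forall psi, Sh1 N k psi -> ip (fun x => v x - w x) psi = 0.

(* pi_1 v (well defined: the projection exists and is unique) *)
Definition pi1 (N k : nat) (v : R -> R) : R -> R :=
  epsilon (inhabits (fun _ : R => 0)) (is_pi1 N k v).

Definition sup_norm (f : R -> R) : R :=
  real (Lub_Rbar (fun y => exists x, 0 <= x <= 1 /\ y = Rabs (f x))).

(* On the reference cell [0, 1] let phi0, phi1 be the polynomials of degree <= k with
   phi0(0) = phi1(1) = 1, phi0(1) = phi1(0) = 0 that are L^2-orthogonal to every "bubble"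
   (polynomial of degree <= k vanishing at 0 and 1).  Glued cell by cell they form a nodal
   basis Phi_j of S_h^1, and for any piecewise polynomial F the product (F, Phi_j) only sees
   the nodal values F(x_(j-1)), F(x_j), F(x_(j+1)).
   Let I v be the S_h^1-interpolant of v and E = pi_1 v - I v.  Since v - pi_1 v is orthogonal
   to Phi_j, (E, Phi_j) = (v - I v, Phi_j); on each cell v - I v differs from a bubble, which
   Phi_j cannot see, by the O(h^(k+1)) error of a Taylor-based interpolant of v.  At a node x_j
   where |E| is maximal the resulting three-term relation is diagonally dominant, because
   int (phi0 +- phi1)^2 > 0, so max_j |E(x_j)| = O(h^(k+1) ||v^(k+1)||). *)

From Stdlib Require Import Reals Lra Lia ZArith ClassicalEpsilon.
From Coquelicot Require Import Coquelicot.
Open Scope R_scope.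

Definition cont (f : R -> R) : Prop := forall x, continuous f x.

Lemma cont_const c : cont (fun _ => c).
Proof. intros x; apply continuous_const. Qed.

Lemma cont_id : cont (fun x => x).
Proof. intros x; apply continuous_id. Qed.

Lemma cont_plus f g : cont f -> cont g -> cont (fun x => f x + g x).
Proof. intros Hf Hg x; apply (continuous_plus f g); auto. Qed.

Lemma cont_mult f g : cont f -> cont g -> cont (fun x => f x * g x).
Proof. intros Hf Hg x; apply (continuous_mult f g); auto. Qed.

Lemma cont_opp f : cont f -> cont (fun x => - f x).
Proof. intros Hf x; apply (continuous_opp f); auto. Qed.

Lemma cont_minus f g : cont f -> cont g -> cont (fun x => f x - g x).
Proof. intros Hf Hg; apply cont_plus, cont_opp; auto. Qed.

Lemma cont_pow n : cont (fun x => x ^ n).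
Proof. induction n; simpl; [apply cont_const | apply cont_mult; auto using cont_id]. Qed.

Lemma cont_comp_affine f a b : cont f -> cont (fun y => f (a * y + b)).
Proof.
  intros Hf x; apply (continuous_comp (fun y => a * y + b) f); auto.
  apply (continuous_plus (fun y => a * y)), continuous_const.
  apply (continuous_mult (fun _ => a)); [apply continuous_const | apply continuous_id].
Qed.

Lemma cont_ext f g : (forall x, f x = g x) -> cont f -> cont g.
Proof. intros E Hf x; apply (continuous_ext f g); auto. Qed.

Fixpoint sum_below (m : nat) (a : nat -> R) : R :=
  match m with O => 0 | S m' => sum_below m' a + a m' end.

Definition lincomb (m : nat) (c : nat -> R) (f : nat -> R -> R) (x : R) : R :=
  sum_below m (fun l => c l * f l x).

Lemma cont_lincomb m c f : (forall l, cont (f l)) -> cont (lincomb m c f).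
Proof.
  intros Hf; induction m; unfold lincomb in *; simpl.
  - apply cont_const.
  - apply cont_plus; auto. apply cont_mult; auto using cont_const.
Qed.

Ltac cont_step := match goal with
 | H : cont ?f |- cont ?f => exact H
 | H : forall l, cont (?f l) |- cont (?f ?j) => exact (H j)
 | H : cont ?f |- cont (fun x => ?f x) => exact H
 | H : forall l, cont (?f l) |- cont (fun x => ?f ?j x) => exact (H j)
 | |- cont (fun x => @?a x + @?b x) => apply (cont_plus a b)
 | |- cont (fun x => @?a x - @?b x) => apply (cont_minus a b)
 | |- cont (fun x => @?a x * @?b x) => apply (cont_mult a b)
 | |- cont (fun x => - @?a x) => apply (cont_opp a)
 | |- cont (fun x => x) => apply cont_id
 | |- cont (fun x => x ^ _) => apply cont_pow
 | |- cont (fun _ => _) => apply cont_const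
 | |- cont (lincomb _ _ _) => apply cont_lincomb
 | |- cont (fun x => lincomb _ _ _ x) => apply cont_lincomb
 | H : forall l, cont (?f l) |- forall l, cont (?f l) => exact H
 end.
Ltac solve_cont := repeat (cont_step; cbv beta).

Lemma sum_below_ext m a b :
  (forall l, (l < m)%nat -> a l = b l) -> sum_below m a = sum_below m b.
Proof.
  induction m; simpl; intros H; auto.
  rewrite IHm, H by (auto; lia); auto.
Qed.

Lemma sum_below_lin m a b p q :
  sum_below m (fun l => p * a l + q * b l) = p * sum_below m a + q * sum_below m b.
Proof. induction m; simpl; [ring | rewrite IHm; ring]. Qed.

Lemma sum_below_eq0 m a : (forall l, (l < m)%nat -> a l = 0) -> sum_below m a = 0.
Proof.
  intros H; rewrite (sum_below_ext m a (fun l => 0 * 0 + 0 * 0)).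
  - rewrite sum_below_lin; ring.
  - intros; rewrite H; auto; ring.
Qed.

Lemma sum_below_delta m j a : (j < m)%nat ->
  sum_below m (fun l => if Nat.eqb l j then a l else 0) = a j.
Proof.
  induction m; intros H; simpl; [lia|].
  destruct (Nat.eq_dec j m) as [->|Hjm].
  - rewrite Nat.eqb_refl, sum_below_eq0; [ring|].
    intros l Hl; destruct (Nat.eqb_spec l m); auto; lia.
  - rewrite IHm by lia; destruct (Nat.eqb_spec m j); [lia | ring].
Qed.

Lemma lincomb_periodic m c f : (forall l x, f l (x + 1) = f l x) ->
  forall x, lincomb m c f (x + 1) = lincomb m c f x.
Proof. intros H x; apply sum_below_ext; intros; rewrite H; auto. Qed.

(** * The L^2(0,1) inner product on continuous functions *)

Lemma ex_RInt_cont f a b : cont f -> ex_RInt f a b.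
Proof. intros H; apply (@ex_RInt_continuous R_CompleteNormedModule); intros; apply H. Qed.

Lemma RInt_ext_R (f g : R -> R) a b :
  (forall x, Rmin a b < x < Rmax a b -> f x = g x) -> RInt f a b = RInt g a b.
Proof. intros H; apply RInt_ext; exact H. Qed.

Lemma RInt_ext_01 (f g : R -> R) :
  (forall x, 0 < x < 1 -> f x = g x) -> RInt f 0 1 = RInt g 0 1.
Proof. intros H; apply RInt_ext_R; rewrite Rmin_left, Rmax_right by lra; exact H. Qed.

Lemma RInt_lin f g a b p q : cont f -> cont g ->
  RInt (fun x => p * f x + q * g x) a b = p * RInt f a b + q * RInt g a b.
Proof.
  intros Hf Hg.
  assert (Hscal : forall h r, cont h -> RInt (fun x => r * h x) a b = r * RInt h a b).
  { intros h r Hh; apply (RInt_scal h a b r), ex_RInt_cont, Hh. }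
  rewrite (RInt_plus (fun x => p * f x) (fun x => q * g x)); try apply ex_RInt_cont; solve_cont.
  rewrite !Hscal; auto.
Qed.

Lemma ip_ext f g h : (forall x, 0 < x < 1 -> f x = g x) -> ip f h = ip g h.
Proof. intros E; apply RInt_ext_01; intros; rewrite E; auto. Qed.

Lemma ip_comm f g : ip f g = ip g f.
Proof. apply RInt_ext_R; intros; ring. Qed.

Lemma ip_lin_l f g h p q : cont f -> cont g -> cont h ->
  ip (fun x => p * f x + q * g x) h = p * ip f h + q * ip g h.
Proof.
  intros Hf Hg Hh; unfold ip.
  rewrite (RInt_ext_R _ (fun x => p * (f x * h x) + q * (g x * h x))) by (intros; ring).
  apply RInt_lin; solve_cont.
Qed.

Lemma ip_minus_l f g h : cont f -> cont g -> cont h ->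
  ip (fun x => f x - g x) h = ip f h - ip g h.
Proof.
  intros; rewrite (ip_ext _ (fun x => 1 * f x + (-1) * g x)) by (intros; ring).
  rewrite ip_lin_l; auto; ring.
Qed.

Lemma ip_plus_l f g h : cont f -> cont g -> cont h ->
  ip (fun x => f x + g x) h = ip f h + ip g h.
Proof.
  intros; rewrite (ip_ext _ (fun x => 1 * f x + 1 * g x)) by (intros; ring).
  rewrite ip_lin_l; auto; ring.
Qed.

Lemma ip_lincomb_r m c f g : (forall l, cont (f l)) -> cont g ->
  ip g (lincomb m c f) = sum_below m (fun l => c l * ip g (f l)).
Proof.
  intros Hf Hg; induction m; simpl.
  - unfold ip; rewrite (RInt_ext_R _ (fun _ => 0)) by (intros; unfold lincomb; simpl; ring).
    rewrite RInt_const; apply (scal_zero_r (V := R_ModuleSpace)).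
  - rewrite ip_comm, (ip_ext _ (fun x => 1 * lincomb m c f x + c m * f m x))
      by (intros; unfold lincomb; simpl; ring).
    rewrite ip_lin_l by solve_cont.
    rewrite ip_comm, IHm, (ip_comm (f m)); ring.
Qed.

Lemma ip_self_nonneg f : cont f -> 0 <= ip f f.
Proof.
  intros Hf; apply RInt_ge_0; [lra | apply ex_RInt_cont; solve_cont | intros; apply Rle_0_sqr].
Qed.

(* [0 <= ip (f + t g) (f + t g) = ip f f + 2 t ip f g] for every [t]. *)
Lemma ip_null_r f g : cont f -> cont g -> ip g g = 0 -> ip f g = 0.
Proof.
  intros Hf Hg H0.
  assert (Ht : forall t, 0 <= ip f f + 2 * t * ip f g).
  { intros t; set (u := fun x => 1 * f x + t * g x).
    assert (Cu : cont u) by (unfold u; solve_cont).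
    replace (ip f f + 2 * t * ip f g) with (ip u u); [apply ip_self_nonneg; auto|].
    unfold u at 1; rewrite ip_lin_l, (ip_comm f), (ip_comm g) by auto.
    unfold u; rewrite !ip_lin_l by auto; rewrite H0, (ip_comm g f); ring. }
  destruct (Req_dec (ip f g) 0) as [|Hb]; auto.
  specialize (Ht (- (ip f f + 1) / (2 * ip f g))).
  replace (2 * (- (ip f f + 1) / (2 * ip f g)) * ip f g) with (- (ip f f + 1)) in Ht
    by (field; auto).
  lra.
Qed.

Lemma ip_lincomb_orth m c f h : (forall l, cont (f l)) -> cont h ->
  (forall l, (l < m)%nat -> ip h (f l) = 0) -> ip h (lincomb m c f) = 0.
Proof.
  intros Hf Hh H; rewrite ip_lincomb_r by auto.
  apply sum_below_eq0; intros l Hl; rewrite H by auto; ring.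
Qed.

(* Induction on [m]: correct the residual of [v] by the multiple of the residual [g] of [f m]
   that makes it orthogonal to [g]; when [g] is null it is orthogonal to everything. *)
Lemma proj_exists m (f : nat -> R -> R) : (forall l, cont (f l)) ->
  forall v, cont v -> exists c, forall j, (j < m)%nat ->
    ip (fun x => v x - lincomb m c f x) (f j) = 0.
Proof.
  intros Hf; induction m as [|m IH]; intros v Hv.
  { exists (fun _ => 0); intros; lia. }
  destruct (IH v Hv) as [c Hc], (IH (f m) (Hf m)) as [d Hd].
  set (r := fun x => v x - lincomb m c f x).
  set (g := fun x => f m x - lincomb m d f x).
  assert (Cr : cont r) by (unfold r; solve_cont).
  assert (Cg : cont g) by (unfold g; solve_cont).
  set (al := if Req_EM_T (ip g g) 0 then 0 else ip r g / ip g g).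
  set (e := fun x => 1 * r x + (- al) * g x).
  assert (Ce : cont e) by (unfold e; solve_cont).
  assert (He_g : ip e g = 0).
  { unfold e; rewrite ip_lin_l by auto.
    unfold al; destruct (Req_EM_T (ip g g) 0) as [Hz|Hz].
    - rewrite (ip_null_r r g); auto; ring.
    - field; auto. }
  assert (He_f : forall j, (j < m)%nat -> ip e (f j) = 0).
  { intros j Hj; unfold e; rewrite ip_lin_l by auto.
    unfold r, g; rewrite Hc, Hd by auto; ring. }
  exists (fun l => if Nat.ltb l m then c l - al * d l else al).
  intros j Hj.
  rewrite (ip_ext _ e).
  2:{ intros x _; unfold lincomb; simpl; rewrite Nat.ltb_irrefl.
      rewrite (sum_below_ext m _ (fun l => 1 * (c l * f l x) + (- al) * (d l * f l x))).
      - rewrite sum_below_lin; unfold e, r, g, lincomb; ring.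
      - intros l Hl; destruct (Nat.ltb_spec l m); [ring | lia]. }
  destruct (Nat.eq_dec j m) as [->|]; [|apply He_f; lia].
  rewrite (ip_comm e), (ip_ext _ (fun x => g x + lincomb m d f x)) by (intros; unfold g; ring).
  rewrite ip_plus_l by solve_cont.
  rewrite !(ip_comm _ e), He_g, ip_lincomb_orth; auto; ring.
Qed.

(** * Polynomials, bubbles and the reference shape functions *)

Inductive deg_le : nat -> (R -> R) -> Prop :=
  | deg_le0 c f : (forall t, f t = c) -> deg_le O f
  | deg_leS k c g f : deg_le k g -> (forall t, f t = c + t * g t) -> deg_le (S k) f.

Lemma deg_le_ext k f g : (forall t, f t = g t) -> deg_le k f -> deg_le k g.
Proof.
  intros E H; destruct H as [c f Hc|k c h f Hh Ef].
  - apply (deg_le0 c); intros; rewrite <- E; auto.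
  - apply (deg_leS k c h); auto; intros; rewrite <- E; auto.
Qed.

Lemma deg_le_const k c : deg_le k (fun _ => c).
Proof.
  revert c; induction k; intros c; [apply (deg_le0 c); auto|].
  apply (deg_leS k c (fun _ => 0)); [apply IHk | intros; ring].
Qed.

Lemma deg_le_lin k f g a b : deg_le k f -> deg_le k g -> deg_le k (fun t => a * f t + b * g t).
Proof.
  intros Hf; revert g; induction Hf as [c f Hc|k c f1 f Hf1 IH Ef]; intros g Hg;
    inversion Hg as [d g' Hd|k' d g1 g' Hg1 Eg]; subst.
  - apply (deg_le0 (a * c + b * d)); intros; rewrite Hc, Hd; auto.
  - apply (deg_leS k (a * c + b * d) (fun t => a * f1 t + b * g1 t)); auto.
    intros; rewrite Ef, Eg; ring.
Qed.

Lemma deg_le_succ k f : deg_le k f -> deg_le (S k) f.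
Proof.
  induction 1 as [c f Hc|k c g f Hg IH Ef].
  - apply (deg_leS O c (fun _ => 0)); [apply deg_le_const | intros; rewrite Hc; ring].
  - apply (deg_leS (S k) c g); auto.
Qed.

Lemma deg_le_mono m k f : (m <= k)%nat -> deg_le m f -> deg_le k f.
Proof. induction 1; auto using deg_le_succ. Qed.

Lemma deg_le_mulx k f : deg_le k f -> deg_le (S k) (fun t => t * f t).
Proof. intros H; apply (deg_leS k 0 f); auto; intros; ring. Qed.

Lemma deg_le_mul_affine k f a b : deg_le k f -> deg_le (S k) (fun t => (a * t + b) * f t).
Proof.
  intros H; apply (deg_le_ext _ (fun t => a * (t * f t) + b * f t)); [intros; ring|].
  apply deg_le_lin; [apply deg_le_mulx | apply deg_le_succ]; auto.
Qed.

Lemma deg_le_comp_affine k f a b : deg_le k f -> deg_le k (fun t => f (a * t + b)).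
Proof.
  induction 1 as [c f Hc|k c g f Hg IH Ef].
  - apply (deg_le0 c); auto.
  - apply (deg_le_ext _ (fun t => 1 * c + 1 * ((a * t + b) * g (a * t + b)))).
    + intros; rewrite Ef; ring.
    + apply deg_le_lin; [apply deg_le_const | apply deg_le_mul_affine; auto].
Qed.

Lemma deg_le_pow m : deg_le m (fun t => t ^ m).
Proof.
  induction m; [apply (deg_le0 1); auto|].
  apply (deg_le_ext _ (fun t => t * t ^ m)); auto using deg_le_mulx.
Qed.

Lemma deg_le_lincomb k m c f :
  (forall l, (l < m)%nat -> deg_le k (f l)) -> deg_le k (lincomb m c f).
Proof.
  induction m; intros H; unfold lincomb; simpl; [apply deg_le_const|].
  apply (deg_le_ext _ (fun t => 1 * lincomb m c f t + c m * f m t)); [intros; unfold lincomb; ring|].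
  apply deg_le_lin; [apply IHm; intros; apply H | apply H]; lia.
Qed.

Lemma cont_deg_le k f : deg_le k f -> cont f.
Proof.
  induction 1 as [c f Hc|k c g f Hg IH Ef].
  - apply (cont_ext (fun _ => c)); auto using cont_const.
  - apply (cont_ext (fun t => c + t * g t)); auto; solve_cont.
Qed.

Lemma deg_le_factor n g r : deg_le (S n) g ->
  exists q, deg_le n q /\ forall t, g t = g r + (t - r) * q t.
Proof.
  revert g; induction n; intros g H; inversion H as [|k c g1 g' Hg1 E]; subst.
  - inversion Hg1 as [c1 g1' Hc1|]; subst.
    exists (fun _ => c1); split; [apply (deg_le0 c1); auto | intros t; rewrite !E, !Hc1; ring].
  - destruct (IHn g1 Hg1) as [q1 [Hq1 E1]].
    exists (fun t => 1 * g1 r + 1 * (t * q1 t)); split.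
    + apply deg_le_lin; [apply deg_le_const | apply deg_le_mulx; auto].
    + intros t; rewrite !E, (E1 t); ring.
Qed.

Lemma sum_pow_shift (c : nat -> R) t k :
  sum_f_R0 (fun j => c j * t ^ j) (S k) = c O + t * sum_f_R0 (fun j => c (S j) * t ^ j) k.
Proof. induction k; [simpl; ring|]. rewrite tech5, IHk, tech5; simpl; ring. Qed.

Lemma deg_le_sum_pow k c : deg_le k (fun t => sum_f_R0 (fun j => c j * t ^ j) k).
Proof.
  revert c; induction k; intros c; [apply (deg_le0 (c O)); intros; simpl; ring|].
  apply (deg_leS k (c O) (fun t => sum_f_R0 (fun j => c (S j) * t ^ j) k));
    [apply IHk | intros; apply sum_pow_shift].
Qed.

Lemma deg_le_sum_powE k f : deg_le k f ->
  exists c, forall t, f t = sum_f_R0 (fun j => c j * t ^ j) k.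
Proof.
  induction 1 as [c f Hc|k c g f Hg [d Hd] E].
  - exists (fun _ => c); intros; simpl; rewrite Hc; ring.
  - exists (fun j => match j with O => c | S j' => d j' end).
    intros t; rewrite sum_pow_shift, E, Hd; auto.
Qed.

Definition bubble (m : nat) (t : R) : R := t * (1 - t) * t ^ m.

Lemma deg_le_bubble m : deg_le (S (S m)) (bubble m).
Proof.
  apply (deg_le_ext _ (fun t => t * ((-1 * t + 1) * t ^ m))); [intros; unfold bubble; ring|].
  apply deg_le_mulx, deg_le_mul_affine, deg_le_pow.
Qed.

Lemma cont_bubble m : cont (bubble m).
Proof. exact (cont_deg_le _ _ (deg_le_bubble m)). Qed.

Lemma lincomb_bubble_0 n c : lincomb n c bubble 0 = 0.
Proof. apply sum_below_eq0; intros; unfold bubble; ring. Qed.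

Lemma lincomb_bubble_1 n c : lincomb n c bubble 1 = 0.
Proof. apply sum_below_eq0; intros; unfold bubble; ring. Qed.

Lemma sum_below_sum_f_R0 n a : sum_below (S n) a = sum_f_R0 a n.
Proof. induction n; simpl in *; [ring | rewrite IHn; auto]. Qed.

(* A polynomial vanishing at 0 and 1 is t (t - 1) times a polynomial of degree two less. *)
Lemma bubble_span n b : deg_le (S n) b -> b 0 = 0 -> b 1 = 0 ->
  exists d, forall t, b t = lincomb n d bubble t.
Proof.
  intros H H0 H1.
  destruct (deg_le_factor n b 0 H) as [q [Hq Eq]].
  assert (Hq1 : q 1 = 0) by (specialize (Eq 1); rewrite H0, H1 in Eq; lra).
  destruct n as [|n].
  - exists (fun _ => 0); inversion Hq as [c1 q' Hc1|]; subst; intros t.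
    rewrite Eq, H0, Hc1; rewrite Hc1 in Hq1; rewrite Hq1; unfold lincomb; simpl; ring.
  - destruct (deg_le_factor n q 1 Hq) as [r [Hr Er]].
    destruct (deg_le_sum_powE n r Hr) as [e He].
    exists (fun j => - e j); intros t.
    rewrite Eq, H0, Er, Hq1; unfold lincomb; rewrite sum_below_sum_f_R0, He.
    rewrite Rplus_0_l, Rplus_0_l, Rminus_0_r, !scal_sum.
    apply sum_eq; intros i _; unfold bubble; ring.
Qed.

(* The restrictions to a cell of the nodal basis of S_h^1, in the local coordinate of [0, 1]. *)
Record ref_pair (n : nat) (phi0 phi1 : R -> R) : Prop := {
  ref_deg0 : deg_le (S n) phi0;
  ref_deg1 : deg_le (S n) phi1;
  ref_phi0_0 : phi0 0 = 1;
  ref_phi0_1 : phi0 1 = 0;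
  ref_phi1_0 : phi1 0 = 0;
  ref_phi1_1 : phi1 1 = 1;
  ref_orth0 : forall b, deg_le (S n) b -> b 0 = 0 -> b 1 = 0 -> ip b phi0 = 0;
  ref_orth1 : forall b, deg_le (S n) b -> b 0 = 0 -> b 1 = 0 -> ip b phi1 = 0 }.

Lemma orth_bubbles n phi : cont phi ->
  (forall l, (l < n)%nat -> ip phi (bubble l) = 0) ->
  forall b, deg_le (S n) b -> b 0 = 0 -> b 1 = 0 -> ip b phi = 0.
Proof.
  intros Hphi Horth b Hb B0 B1; destruct (bubble_span n b Hb B0 B1) as [d Hd].
  rewrite (ip_ext _ (lincomb n d bubble)) by (intros; apply Hd).
  rewrite ip_comm; apply ip_lincomb_orth; auto using cont_bubble.
Qed.

Lemma ref_pair_exists n : exists phi0 phi1, ref_pair n phi0 phi1.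
Proof.
  pose proof cont_bubble as Cb.
  assert (C0 : cont (fun t => 1 - t)) by solve_cont.
  destruct (proj_exists n bubble Cb _ C0) as [c0 Hc0].
  destruct (proj_exists n bubble Cb _ cont_id) as [c1 Hc1].
  assert (Hlc : forall c, deg_le (S n) (lincomb n c bubble)).
  { intros c; apply deg_le_lincomb; intros l Hl.
    apply (deg_le_mono (S (S l))); [lia | apply deg_le_bubble]. }
  exists (fun t => 1 - t - lincomb n c0 bubble t), (fun t => t - lincomb n c1 bubble t).
  split; rewrite ?lincomb_bubble_0, ?lincomb_bubble_1; try ring.
  - apply (deg_le_ext _ (fun t => 1 * ((-1 * t + 1) * 1) + (-1) * lincomb n c0 bubble t));
      [intros; ring|].
    apply deg_le_lin; auto; apply (deg_le_mono 1); [lia | apply deg_le_mul_affine, deg_le_const].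
  - apply (deg_le_ext _ (fun t => 1 * (t * 1) + (-1) * lincomb n c1 bubble t)); [intros; ring|].
    apply deg_le_lin; auto; apply (deg_le_mono 1); [lia | apply deg_le_mulx, deg_le_const].
  - apply orth_bubbles; [solve_cont | exact Hc0].
  - apply orth_bubbles; [solve_cont | exact Hc1].
Qed.

Lemma ip_self_pos_at_0 g : cont g -> g 0 <> 0 -> 0 < ip g g.
Proof.
  intros Hg H0.
  assert (Ha : 0 < Rabs (g 0) / 2) by (apply Rabs_pos_lt in H0; lra).
  destruct (proj1 (filterlim_locally g (g 0)) (Hg 0) (mkposreal _ Ha)) as [d Hd].
  set (e := Rmin (d / 2) (1 / 2)).
  assert (He : 0 < e < 1 /\ e < d).
  { pose proof (cond_pos d); pose proof (Rmin_l (d / 2) (1 / 2)); pose proof (Rmin_r (d / 2) (1 / 2)).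
    assert (0 < e) by (apply Rmin_pos; lra); unfold e in *; lra. }
  assert (Hc : cont (fun x => g x * g x)) by solve_cont.
  unfold ip; rewrite <- (RInt_Chasles (fun x => g x * g x) 0 e 1) by (apply ex_RInt_cont; auto).
  change (0 < RInt (fun x => g x * g x) 0 e + RInt (fun x => g x * g x) e 1).
  assert (0 < RInt (fun x => g x * g x) 0 e).
  { apply RInt_gt_0; [lra | | intros; apply Hc].
    intros x Hx; assert (Hb : Rabs (g x - g 0) < Rabs (g 0) / 2).
    { apply (Hd x); change (Rabs (x - 0) < d); rewrite Rminus_0_r, Rabs_right; lra. }
    assert (g x <> 0) by (intros E; rewrite E, Rminus_0_l, Rabs_Ropp in Hb; lra).
    destruct (Rlt_or_le 0 (g x)); nra. }
  assert (0 <= RInt (fun x => g x * g x) e 1)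
    by (apply RInt_ge_0; [lra | apply ex_RInt_cont; auto | intros; apply Rle_0_sqr]).
  lra.
Qed.

Section ReferencePair.

Variables (n : nat) (phi0 phi1 : R -> R).
Hypothesis Href : ref_pair n phi0 phi1.

Lemma cont_phi0 : cont phi0.
Proof. exact (cont_deg_le _ _ (ref_deg0 _ _ _ Href)). Qed.

Lemma cont_phi1 : cont phi1.
Proof. exact (cont_deg_le _ _ (ref_deg1 _ _ _ Href)). Qed.

(* Subtract from [p] its interpolant [p 0 phi0 + p 1 phi1]: the remainder is a bubble. *)
Lemma ref_ip_endpoints p : deg_le (S n) p ->
  ip p phi0 = p 0 * ip phi0 phi0 + p 1 * ip phi1 phi0 /\
  ip p phi1 = p 0 * ip phi0 phi1 + p 1 * ip phi1 phi1.
Proof.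
  intros Hp; destruct Href as [D0 D1 E00 E01 E10 E11 O0 O1].
  pose proof cont_phi0 as C0; pose proof cont_phi1 as C1; pose proof (cont_deg_le _ _ Hp) as Cp.
  set (b := fun t => 1 * p t + 1 * (- p 0 * phi0 t + - p 1 * phi1 t)).
  assert (Db : deg_le (S n) b)
    by (unfold b; apply deg_le_lin; [|apply deg_le_lin]; auto).
  assert (Eb0 : b 0 = 0) by (unfold b; rewrite E00, E10; ring).
  assert (Eb1 : b 1 = 0) by (unfold b; rewrite E01, E11; ring).
  assert (Ep : forall phi, cont phi ->
            ip p phi = ip b phi + (p 0 * ip phi0 phi + p 1 * ip phi1 phi)).
  { intros phi Cphi.
    rewrite (ip_ext p (fun t => 1 * b t + 1 * (p 0 * phi0 t + p 1 * phi1 t)))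
      by (intros; unfold b; ring).
    rewrite !ip_lin_l by (unfold b; solve_cont); ring. }
  rewrite !Ep, O0, O1 by auto; split; ring.
Qed.

Lemma ref_gram_dominant :
  0 < ip phi0 phi0 + ip phi1 phi1 - 2 * Rabs (ip phi0 phi1).
Proof.
  pose proof cont_phi0 as C0; pose proof cont_phi1 as C1.
  assert (Hpos : forall s, s * s = 1 -> 0 < ip phi0 phi0 + ip phi1 phi1 + 2 * s * ip phi0 phi1).
  { intros s Hs1.
    assert (Hs : 0 < ip (fun t => 1 * phi0 t + s * phi1 t) (fun t => 1 * phi0 t + s * phi1 t)).
    { apply ip_self_pos_at_0; [solve_cont|].
      rewrite (ref_phi0_0 _ _ _ Href), (ref_phi1_0 _ _ _ Href); lra. }
    rewrite ip_lin_l, !(ip_comm _ (fun t => 1 * phi0 t + s * phi1 t)), !ip_lin_l in Hs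
      by solve_cont.
    rewrite (ip_comm phi1 phi0) in Hs.
    replace (1 * (1 * ip phi0 phi0 + s * ip phi0 phi1) + s * (1 * ip phi0 phi1 + s * ip phi1 phi1))
      with (ip phi0 phi0 + (s * s) * ip phi1 phi1 + 2 * s * ip phi0 phi1) in Hs by ring.
    rewrite Hs1 in Hs; lra. }
  assert (Hp := Hpos 1 ltac:(ring)); assert (Hm := Hpos (-1) ltac:(ring)).
  unfold Rabs; destruct (Rcase_abs (ip phi0 phi1)); lra.
Qed.

End ReferencePair.

(** * Functions glued from cell pieces *)

Lemma continuous_piecewise (f g h : R -> R) x d : 0 < d ->
  continuous f x -> continuous g x ->
  (forall y, x - d < y <= x -> h y = f y) -> (forall y, x <= y < x + d -> h y = g y) ->
  continuous h x.
Proof.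
  intros Hd Hf Hg Hl Hr.
  assert (Ef : h x = f x) by (apply Hl; lra).
  assert (Eg : h x = g x) by (apply Hr; lra).
  apply filterlim_locally; intros eps.
  assert (Hnear : locally x (fun y => Rabs (y - x) < d)) by (exists (mkposreal d Hd); auto).
  generalize (filter_and _ _ Hnear (filter_and _ _
    (proj1 (filterlim_locally f (f x)) Hf eps) (proj1 (filterlim_locally g (g x)) Hg eps))).
  apply filter_imp; intros y [Hy [Bf Bg]].
  apply Rabs_def2 in Hy; destruct (Rle_or_lt y x).
  - rewrite Ef, (Hl y) by lra; exact Bf.
  - rewrite Eg, (Hr y) by lra; exact Bg.
Qed.

Definition glue (s : R) (L : Z -> R -> R) (x : R) : R :=
  L (Int_part (s * x)) (s * x - IZR (Int_part (s * x))).

Definition glue_compatible (L : Z -> R -> R) : Prop := forall z, L z 1 = L (z + 1)%Z 0.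

Lemma glue_cell s L x z : glue_compatible L -> IZR z <= s * x <= IZR z + 1 ->
  glue s L x = L z (s * x - IZR z).
Proof.
  intros HL [H1 H2]; unfold glue.
  destruct (Rlt_or_le (s * x) (IZR z + 1)).
  - rewrite <- (Int_part_spec (s * x) z); auto; lra.
  - assert (E : s * x = IZR (z + 1)) by (rewrite plus_IZR; simpl; lra).
    rewrite <- (Int_part_spec (s * x) (z + 1)) by lra.
    rewrite E, plus_IZR, Rminus_eq_0, <- HL; f_equal; simpl; ring.
Qed.

Lemma glue_cont s L : 0 < s -> glue_compatible L -> (forall z, cont (L z)) -> cont (glue s L).
Proof.
  intros Hs HL HC x.
  set (z := Int_part (s * x)).
  assert (Hz := base_Int_part (s * x)); fold z in Hz.
  set (piece := fun z' y => L z' (s * y + - IZR z')).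
  assert (Cpiece : forall z', cont (piece z')) by (intros; apply cont_comp_affine, HC).
  assert (Hcell : forall z' y, IZR z' <= s * y <= IZR z' + 1 -> glue s L y = piece z' y).
  { intros z' y Hy; rewrite (glue_cell s L y z') by auto; unfold piece; f_equal; ring. }
  destruct (Req_dec (s * x) (IZR z)) as [E0|E0].
  - assert (Hinv : s * / s = 1) by (field; lra).
    apply (continuous_piecewise (piece (z - 1)%Z) (piece z) _ x (/ s));
      [apply Rinv_0_lt_compat; lra | apply Cpiece | apply Cpiece | |];
      intros y Hy; apply Hcell; rewrite ?minus_IZR; simpl.
    + assert (s * x - 1 < s * y) by nra; assert (s * y <= s * x) by nra; lra.
    + assert (s * y < s * x + 1) by nra; assert (s * x <= s * y) by nra; lra.
  - set (w := Rmin (s * x - IZR z) (IZR z + 1 - s * x)).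
    assert (Hw : 0 < w) by (apply Rmin_pos; lra).
    assert (Hw1 : w <= s * x - IZR z) by apply Rmin_l.
    assert (Hw2 : w <= IZR z + 1 - s * x) by apply Rmin_r.
    assert (E : s * (w / s) = w) by (field; lra).
    apply (continuous_piecewise (piece z) (piece z) _ x (w / s));
      [apply Rdiv_lt_0_compat; lra | apply Cpiece | apply Cpiece | |]; intros y Hy; apply Hcell.
    + assert (s * x - w < s * y) by nra; assert (s * y <= s * x) by nra; lra.
    + assert (s * y < s * x + w) by nra; assert (s * x <= s * y) by nra; lra.
Qed.

Lemma glue_periodic N L : (forall z t, L (z + Z.of_nat N)%Z t = L z t) ->
  forall x, glue (INR N) L (x + 1) = glue (INR N) L x.
Proof.
  intros HP x; unfold glue.
  assert (Hz := base_Int_part (INR N * x)).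
  set (z := Int_part (INR N * x)) in *.
  assert (E : Int_part (INR N * (x + 1)) = (z + Z.of_nat N)%Z).
  { symmetry; apply Int_part_spec; rewrite plus_IZR, <- INR_IZR_INZ; lra. }
  rewrite E, HP; f_equal; rewrite plus_IZR, <- INR_IZR_INZ; ring.
Qed.

(** * Cells of the mesh and piecewise polynomials *)

Lemma INR_pos N : (1 <= N)%nat -> 0 < INR N.
Proof. intros H; apply lt_0_INR; lia. Qed.

Definition cell_pt (N z : nat) (t : R) : R := (INR z + t) / INR N.

Lemma cell_pt_0 N z : cell_pt N z 0 = node N z.
Proof. unfold cell_pt, node; f_equal; ring. Qed.

Lemma cell_pt_1 N z : cell_pt N z 1 = node N (S z).
Proof. unfold cell_pt, node; rewrite S_INR; auto. Qed.

Lemma cont_comp_cell_pt N z G : (1 <= N)%nat -> cont G -> cont (fun t => G (cell_pt N z t)).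
Proof.
  intros HN HG; assert (HNp := INR_pos N HN).
  apply (cont_ext (fun t => G (/ INR N * t + INR z / INR N))); [|apply cont_comp_affine, HG].
  intros; unfold cell_pt; f_equal; field; lra.
Qed.

Lemma RInt_rescale F a h : cont F -> RInt F a (a + h) = h * RInt (fun t => F (h * t + a)) 0 1.
Proof.
  intros H.
  rewrite <- (RInt_scal (fun t => F (h * t + a))) by (apply ex_RInt_cont, cont_comp_affine, H).
  assert (E := RInt_comp_lin F h a 0 1 (ex_RInt_cont _ _ _ H)).
  replace (h * 0 + a) with a in E by ring; replace (h * 1 + a) with (a + h) in E by ring.
  rewrite <- E; apply RInt_ext_R; intros; reflexivity.
Qed.

Lemma RInt_cells N F : (1 <= N)%nat -> cont F ->
  RInt F 0 1 = sum_below N (fun z => / INR N * RInt (fun t => F (cell_pt N z t)) 0 1).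
Proof.
  intros HN HF; assert (HNp := INR_pos N HN).
  assert (G : forall m, RInt F 0 (INR m / INR N)
                        = sum_below m (fun z => / INR N * RInt (fun t => F (cell_pt N z t)) 0 1)).
  { induction m; simpl sum_below.
    - replace (INR 0 / INR N) with 0 by (simpl; field; lra).
      exact (RInt_point (V := R_CompleteNormedModule) 0 F).
    - rewrite <- IHm.
      replace (INR (S m) / INR N) with (INR m / INR N + / INR N) by (rewrite S_INR; field; lra).
      rewrite <- (RInt_Chasles F 0 (INR m / INR N)) by (apply ex_RInt_cont; auto).
      rewrite RInt_rescale by auto.
      change (plus ?a ?b) with (a + b); f_equal; f_equal.
      apply RInt_ext_R; intros; unfold cell_pt; f_equal; field; lra. }
  rewrite <- G; f_equal; field; lra.
Qed.

Definition cellwise_poly (N k : nat) (F : R -> R) : Prop :=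
  forall z, (z < N)%nat -> exists p, deg_le k p /\ forall t, 0 <= t <= 1 -> F (cell_pt N z t) = p t.

Lemma cellwise_poly_minus N k F G : cellwise_poly N k F -> cellwise_poly N k G ->
  cellwise_poly N k (fun x => F x - G x).
Proof.
  intros HF HG z Hz; destruct (HF z Hz) as [p [Hp Ep]], (HG z Hz) as [q [Hq Eq]].
  exists (fun t => 1 * p t + (-1) * q t); split; [apply deg_le_lin; auto|].
  intros; rewrite Ep, Eq by auto; ring.
Qed.

Lemma cellwise_poly_lincomb N k m c f :
  (forall l, (l < m)%nat -> cellwise_poly N k (f l)) -> cellwise_poly N k (lincomb m c f).
Proof.
  intros H z Hz; induction m.
  - exists (fun _ => 0); split; [apply deg_le_const | intros; unfold lincomb; auto].
  - destruct IHm as [p [Dp Ep]]; [intros; apply H; lia|].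
    destruct (H m (Nat.lt_succ_diag_r m) z Hz) as [q [Dq Eq]].
    exists (fun t => 1 * p t + c m * q t); split; [apply deg_le_lin; auto|].
    intros t Ht; unfold lincomb; simpl; rewrite <- Ep, <- Eq by auto; unfold lincomb; ring.
Qed.

Lemma cell_pt_between N z t : (1 <= N)%nat -> 0 <= t <= 1 ->
  node N z <= cell_pt N z t <= node N (S z).
Proof.
  intros HN Ht; assert (HNp := INR_pos N HN).
  assert (Hinv : 0 < / INR N) by (apply Rinv_0_lt_compat; lra).
  unfold cell_pt, node, Rdiv; rewrite S_INR; split; apply Rmult_le_compat_r; lra.
Qed.

Lemma cell_pt_local N z x : (1 <= N)%nat -> node N z <= x <= node N (S z) ->
  0 <= INR N * x - INR z <= 1 /\ x = cell_pt N z (INR N * x - INR z).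
Proof.
  intros HN Hx; assert (HNp := INR_pos N HN).
  unfold node in Hx; rewrite S_INR in Hx.
  assert (E : forall r, INR N * (r / INR N) = r) by (intros; field; lra).
  destruct Hx as [H1 H2].
  apply (Rmult_le_compat_l (INR N)) in H1, H2; try lra; rewrite E in H1, H2.
  split; [lra | unfold cell_pt; field; lra].
Qed.

Lemma Vhk_cont N k f : Vhk N k f -> cont f.
Proof. intros [[Hc _] _]; exact Hc. Qed.

Lemma Vhk_cellwise_poly N k F : (1 <= N)%nat -> Vhk N k F -> cellwise_poly N k F.
Proof.
  intros HN [_ Hloc] z Hz; assert (HNp := INR_pos N HN).
  destruct (Hloc (S z)) as [c Hc]; [lia|].
  replace (S z - 1)%nat with z in Hc by lia.
  exists (fun t => (fun x => sum_f_R0 (fun j => c j * x ^ j) k) (/ INR N * t + INR z / INR N)).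
  split; [apply (deg_le_comp_affine k (fun x => sum_f_R0 (fun j => c j * x ^ j) k)),
            deg_le_sum_pow|].
  intros t Ht; rewrite Hc by (apply cell_pt_between; auto).
  replace (/ INR N * t + INR z / INR N) with (cell_pt N z t) by (unfold cell_pt; field; lra).
  reflexivity.
Qed.

Lemma cellwise_poly_Vhk N k F : (1 <= N)%nat -> Cp F -> cellwise_poly N k F -> Vhk N k F.
Proof.
  intros HN Hcp HF; split; auto; intros i Hi.
  destruct (HF (i - 1)%nat) as [p [Hp Ep]]; [lia|].
  destruct (deg_le_sum_powE k (fun x => p (INR N * x + - INR (i - 1)))) as [c Hc];
    [apply deg_le_comp_affine; auto|].
  exists c; intros x Hx; rewrite <- Hc.
  replace i with (S (i - 1)) in Hx at 2 by lia.
  destruct (cell_pt_local N (i - 1) x HN Hx) as [Ht Ex].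
  rewrite Ex at 1; rewrite Ep by auto; f_equal; ring.
Qed.

Lemma periodic_nat (F : R -> R) : (forall x, F (x + 1) = F x) ->
  forall m x, F (x + INR m) = F x.
Proof.
  intros HP m; induction m; intros x; [simpl; rewrite Rplus_0_r; auto|].
  rewrite S_INR, <- Rplus_assoc, HP; auto.
Qed.

Lemma periodic_Z (F : R -> R) : (forall x, F (x + 1) = F x) ->
  forall z x, F (x + IZR z) = F x.
Proof.
  intros HP z x; destruct z as [|p|p].
  - rewrite Rplus_0_r; auto.
  - rewrite <- positive_nat_Z, <- INR_IZR_INZ; apply periodic_nat; auto.
  - rewrite <- Pos2Z.opp_pos, opp_IZR, <- positive_nat_Z, <- INR_IZR_INZ.
    rewrite <- (periodic_nat F HP (Pos.to_nat p) (x + - INR (Pos.to_nat p))); f_equal; ring.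
Qed.

Lemma periodic_node_mod (F : R -> R) N i : (1 <= N)%nat -> (forall x, F (x + 1) = F x) ->
  F (node N i) = F (node N (i mod N)).
Proof.
  intros HN HP; assert (HNp := INR_pos N HN).
  replace (node N i) with (node N (i mod N) + INR (i / N)) by
    (unfold node; rewrite (Nat.div_mod_eq i N) at 3; rewrite plus_INR, mult_INR; field; lra).
  apply periodic_nat; auto.
Qed.

(** * The nodal basis of S_h^1 and the projection pi_1 *)

Definition prev_cell (N j : nat) : nat := if Nat.eqb j 0 then (N - 1)%nat else (j - 1)%nat.

Lemma prev_cell_lt N j : (1 <= N)%nat -> (j < N)%nat -> (prev_cell N j < N)%nat.
Proof. unfold prev_cell; destruct (Nat.eqb_spec j 0); lia. Qed.

Lemma succ_prev_cell_mod N j : (1 <= N)%nat -> (j < N)%nat -> (S (prev_cell N j) mod N = j)%nat.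
Proof.
  intros HN Hj; unfold prev_cell; destruct (Nat.eqb_spec j 0) as [->|].
  - replace (S (N - 1)) with N by lia; apply Nat.Div0.mod_same.
  - replace (S (j - 1)) with j by lia; apply Nat.mod_small; lia.
Qed.

Lemma Z_eqb_of_nat a b : Z.eqb (Z.of_nat a) (Z.of_nat b) = Nat.eqb a b.
Proof. destruct (Z.eqb_spec (Z.of_nat a) (Z.of_nat b)), (Nat.eqb_spec a b); lia. Qed.

Lemma cell_index_eqb N z j : (z < N)%nat ->
  Z.eqb (Z.of_nat z mod Z.of_nat N) (Z.of_nat j) = Nat.eqb z j.
Proof. intros H; rewrite Z.mod_small by lia; apply Z_eqb_of_nat. Qed.

Lemma next_cell_index_eqb N z j : (z < N)%nat -> (j < N)%nat ->
  Z.eqb ((Z.of_nat z + 1) mod Z.of_nat N) (Z.of_nat j) = Nat.eqb z (prev_cell N j).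
Proof.
  intros Hz Hj; unfold prev_cell.
  destruct (Nat.eq_dec (S z) N).
  - replace (Z.of_nat z + 1)%Z with (Z.of_nat N) by lia; rewrite Z_mod_same_full.
    destruct (Nat.eqb_spec j 0), (Z.eqb_spec 0 (Z.of_nat j)), (Nat.eqb_spec z (N - 1)),
      (Nat.eqb_spec z (j - 1)); auto; lia.
  - rewrite Z.mod_small by lia.
    destruct (Nat.eqb_spec j 0), (Z.eqb_spec (Z.of_nat z + 1) (Z.of_nat j)),
      (Nat.eqb_spec z (N - 1)), (Nat.eqb_spec z (j - 1)); auto; lia.
Qed.

Section NodalBasis.

Variables (n : nat) (phi0 phi1 : R -> R).
Hypothesis Href : ref_pair n phi0 phi1.
Variable N : nat.
Hypothesis HN : (1 <= N)%nat.

Definition nodal_piece (j : nat) (z : Z) (t : R) : R :=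
  (if Z.eqb (z mod Z.of_nat N) (Z.of_nat j) then phi0 t else 0) +
  (if Z.eqb ((z + 1) mod Z.of_nat N) (Z.of_nat j) then phi1 t else 0).

(* [phi0] on the cells [x_j, x_(j+1)] and [phi1] on the cells [x_(j-1), x_j], indices mod N. *)
Definition nodal_basis (j : nat) : R -> R := glue (INR N) (nodal_piece j).

Lemma nodal_piece_compatible j : glue_compatible (nodal_piece j).
Proof.
  destruct Href as [_ _ E00 E01 E10 E11 _ _]; intros z; unfold nodal_piece.
  replace (z + 1 + 1)%Z with ((z + 1) + 1)%Z by ring.
  destruct (Z.eqb (z mod Z.of_nat N) (Z.of_nat j)), (Z.eqb ((z + 1) mod Z.of_nat N) (Z.of_nat j)),
    (Z.eqb ((z + 1 + 1) mod Z.of_nat N) (Z.of_nat j)); rewrite ?E00, ?E01, ?E10, ?E11; ring.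
Qed.

Lemma cont_nodal_basis j : cont (nodal_basis j).
Proof.
  apply glue_cont; [apply INR_pos; auto | apply nodal_piece_compatible|].
  pose proof (cont_phi0 _ _ _ Href); pose proof (cont_phi1 _ _ _ Href).
  intros z; unfold nodal_piece.
  destruct (Z.eqb (z mod Z.of_nat N) (Z.of_nat j)), (Z.eqb ((z + 1) mod Z.of_nat N) (Z.of_nat j));
    solve_cont.
Qed.

Lemma nodal_basis_periodic j x : nodal_basis j (x + 1) = nodal_basis j x.
Proof.
  apply glue_periodic; intros z t; unfold nodal_piece.
  replace (z + Z.of_nat N)%Z with (z + 1 * Z.of_nat N)%Z by ring.
  replace (z + 1 * Z.of_nat N + 1)%Z with ((z + 1) + 1 * Z.of_nat N)%Z by ring.
  rewrite !Z_mod_plus_full; auto.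
Qed.

Lemma nodal_basis_cell j z t : (z < N)%nat -> (j < N)%nat -> 0 <= t <= 1 ->
  nodal_basis j (cell_pt N z t)
  = (if Nat.eqb z j then phi0 t else 0) + (if Nat.eqb z (prev_cell N j) then phi1 t else 0).
Proof.
  intros Hz Hj Ht; assert (HNp := INR_pos N HN); unfold nodal_basis.
  assert (E : INR N * cell_pt N z t = IZR (Z.of_nat z) + t)
    by (unfold cell_pt; rewrite <- INR_IZR_INZ; field; lra).
  rewrite (glue_cell _ _ _ (Z.of_nat z)) by (apply nodal_piece_compatible || lra).
  rewrite E; replace (IZR (Z.of_nat z) + t - IZR (Z.of_nat z)) with t by ring.
  unfold nodal_piece; rewrite cell_index_eqb, next_cell_index_eqb; auto.
Qed.

Lemma nodal_basis_node j i : nodal_basis j (node N i) = if Nat.eqb (i mod N) j then 1 else 0.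
Proof.
  assert (HNp := INR_pos N HN); unfold nodal_basis.
  destruct Href as [_ _ E00 _ E10 _ _ _].
  assert (E : INR N * node N i = IZR (Z.of_nat i))
    by (unfold node; rewrite <- INR_IZR_INZ; field; lra).
  rewrite (glue_cell _ _ _ (Z.of_nat i)) by (apply nodal_piece_compatible || lra).
  rewrite E, Rminus_eq_0; unfold nodal_piece; rewrite E00, E10, <- Nat2Z.inj_mod, Z_eqb_of_nat.
  destruct (Nat.eqb (i mod N) j), (Z.eqb _ _); ring.
Qed.

Lemma cellwise_poly_nodal_basis j : (j < N)%nat -> cellwise_poly N (S n) (nodal_basis j).
Proof.
  intros Hj z Hz.
  exists (fun t => (if Nat.eqb z j then phi0 t else 0)
                 + (if Nat.eqb z (prev_cell N j) then phi1 t else 0)).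
  split; [|intros; apply nodal_basis_cell; auto].
  destruct Href as [D0 D1 _ _ _ _ _ _].
  destruct (Nat.eqb z j), (Nat.eqb z (prev_cell N j)).
  - apply (deg_le_ext _ (fun t => 1 * phi0 t + 1 * phi1 t)); [intros; ring | apply deg_le_lin; auto].
  - apply (deg_le_ext _ phi0); auto; intros; ring.
  - apply (deg_le_ext _ phi1); auto; intros; ring.
  - apply (deg_le_ext _ (fun _ => 0)); [intros; ring | apply deg_le_const].
Qed.

Lemma ip_nodal_basis G j : cont G -> (j < N)%nat ->
  ip G (nodal_basis j) = / INR N * (ip (fun t => G (cell_pt N j t)) phi0
                                    + ip (fun t => G (cell_pt N (prev_cell N j) t)) phi1).
Proof.
  intros HG Hj; assert (HNp := INR_pos N HN).
  pose proof (cont_phi0 _ _ _ Href) as C0; pose proof (cont_phi1 _ _ _ Href) as C1.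
  pose proof (cont_nodal_basis j) as Cb.
  unfold ip at 1; rewrite (RInt_cells N) by (auto; solve_cont).
  rewrite (sum_below_ext _ _ (fun z =>
      / INR N * (if Nat.eqb z j then ip (fun t => G (cell_pt N z t)) phi0 else 0)
    + / INR N * (if Nat.eqb z (prev_cell N j) then ip (fun t => G (cell_pt N z t)) phi1 else 0))).
  { rewrite sum_below_lin, !sum_below_delta by auto using prev_cell_lt; ring. }
  intros z Hz; assert (Cz := cont_comp_cell_pt N z G HN HG).
  rewrite (RInt_ext_01 _ (fun t => (if Nat.eqb z j then 1 else 0) * (G (cell_pt N z t) * phi0 t)
                + (if Nat.eqb z (prev_cell N j) then 1 else 0) * (G (cell_pt N z t) * phi1 t))).
  - rewrite RInt_lin by solve_cont; fold (ip (fun t => G (cell_pt N z t)) phi0).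
    fold (ip (fun t => G (cell_pt N z t)) phi1).
    destruct (Nat.eqb z j), (Nat.eqb z (prev_cell N j)); ring.
  - intros t Ht; rewrite nodal_basis_cell by (auto; lra).
    destruct (Nat.eqb z j), (Nat.eqb z (prev_cell N j)); ring.
Qed.

Lemma ip_nodal_basis_cellwise F j : cont F -> cellwise_poly N (S n) F -> (j < N)%nat ->
  ip F (nodal_basis j) = / INR N *
    (F (node N j) * ip phi0 phi0 + F (node N (S j)) * ip phi1 phi0
     + F (node N (prev_cell N j)) * ip phi0 phi1
     + F (node N (S (prev_cell N j))) * ip phi1 phi1).
Proof.
  intros HF HP Hj; rewrite ip_nodal_basis by auto.
  destruct (HP j Hj) as [p [Hp Ep]].
  destruct (HP (prev_cell N j)) as [q [Hq Eq]]; [apply prev_cell_lt; auto|].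
  rewrite (ip_ext (fun t => F (cell_pt N j t)) p) by (intros; apply Ep; lra).
  rewrite (ip_ext (fun t => F (cell_pt N (prev_cell N j) t)) q) by (intros; apply Eq; lra).
  rewrite (proj1 (ref_ip_endpoints _ _ _ Href p Hp)), (proj2 (ref_ip_endpoints _ _ _ Href q Hq)).
  rewrite <- !cell_pt_1, <- !cell_pt_0, !Ep, !Eq by lra; ring.
Qed.

Lemma Cp_nodal_basis j : Cp (nodal_basis j).
Proof. split; [apply cont_nodal_basis | apply nodal_basis_periodic]. Qed.

Lemma nodal_basis_Sh1 j : (j < N)%nat -> Sh1 N (S n) (nodal_basis j).
Proof.
  intros Hj; split.
  - apply cellwise_poly_Vhk, cellwise_poly_nodal_basis; auto using Cp_nodal_basis.
  - intros phi [Hv H0]; assert (Cphi := Vhk_cont _ _ _ Hv).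
    rewrite ip_comm, ip_nodal_basis_cellwise, !H0 by auto using Vhk_cellwise_poly; ring.
Qed.

Definition interp (psi : R -> R) : R -> R := lincomb N (fun l => psi (node N l)) nodal_basis.

Lemma cont_interp psi : cont (interp psi).
Proof. apply cont_lincomb, cont_nodal_basis. Qed.

Lemma interp_periodic psi x : interp psi (x + 1) = interp psi x.
Proof. apply lincomb_periodic; intros; apply nodal_basis_periodic. Qed.

Lemma cellwise_poly_interp psi : cellwise_poly N (S n) (interp psi).
Proof. apply cellwise_poly_lincomb; intros; apply cellwise_poly_nodal_basis; auto. Qed.

Lemma interp_node psi i : (forall x, psi (x + 1) = psi x) -> interp psi (node N i) = psi (node N i).
Proof.
  intros HP; unfold interp, lincomb.
  rewrite (sum_below_ext _ _ (fun l => if Nat.eqb l (i mod N) then psi (node N l) else 0)).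
  - rewrite sum_below_delta by (apply Nat.mod_upper_bound; lia).
    symmetry; apply periodic_node_mod; auto.
  - intros l Hl; rewrite nodal_basis_node.
    destruct (Nat.eqb_spec (i mod N) l), (Nat.eqb_spec l (i mod N)); try lia; ring.
Qed.

Lemma Sh2_sub_interp psi : Vhk N (S n) psi -> Sh2 N (S n) (fun x => psi x - interp psi x).
Proof.
  intros Hpsi; assert (Cpsi := Vhk_cont _ _ _ Hpsi).
  assert (Ppsi : forall x, psi (x + 1) = psi x) by apply (proj1 Hpsi).
  pose proof (cont_interp psi) as Ci.
  split.
  - apply cellwise_poly_Vhk; auto.
    + split; [apply cont_minus; auto | intros x; rewrite Ppsi, interp_periodic; auto].
    + apply cellwise_poly_minus; [apply Vhk_cellwise_poly; auto | apply cellwise_poly_interp].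
  - intros i; rewrite interp_node by auto; ring.
Qed.

(* An element of S_h^1 vanishing at the nodes lies in S_h^2 too, hence is null. *)
Lemma Sh1_sub_interp_null psi : Sh1 N (S n) psi ->
  ip (fun x => psi x - interp psi x) (fun x => psi x - interp psi x) = 0.
Proof.
  intros [Hv Horth]; assert (Cpsi := Vhk_cont _ _ _ Hv).
  pose proof (cont_interp psi) as Ci.
  assert (Hz := Sh2_sub_interp psi Hv).
  assert (Cz : cont (fun x => psi x - interp psi x)) by solve_cont.
  rewrite ip_minus_l, Horth by auto.
  rewrite ip_comm; unfold interp; rewrite ip_lincomb_orth; auto using cont_nodal_basis; [ring|].
  intros l Hl; rewrite ip_comm; apply nodal_basis_Sh1; auto.
Qed.

Lemma is_pi1_pi1 v : cont v -> is_pi1 N (S n) v (pi1 N (S n) v).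
Proof.
  intros Hv; unfold pi1; apply epsilon_spec.
  pose proof cont_nodal_basis as Cb.
  destruct (proj_exists N nodal_basis Cb v Hv) as [c Hc].
  set (w := lincomb N c nodal_basis).
  assert (Cw : cont w) by (unfold w; solve_cont).
  exists w; split; [split|].
  - apply cellwise_poly_Vhk; auto.
    + split; [exact Cw | apply lincomb_periodic; intros; apply nodal_basis_periodic].
    + apply cellwise_poly_lincomb; intros; apply cellwise_poly_nodal_basis; auto.
  - intros phi Hphi; assert (Cphi := Vhk_cont _ _ _ (proj1 Hphi)).
    rewrite ip_comm; apply ip_lincomb_orth; auto.
    intros l Hl; rewrite ip_comm; apply nodal_basis_Sh1; auto.
  - intros psi Hpsi; assert (Cpsi := Vhk_cont _ _ _ (proj1 Hpsi)).
    pose proof (cont_interp psi) as Ci.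
    rewrite (ip_comm _ psi), (ip_ext psi (fun x => (psi x - interp psi x) + interp psi x))
      by (intros; ring).
    rewrite ip_plus_l, !(ip_comm _ (fun x => v x - w x)) by solve_cont.
    rewrite (ip_null_r (fun x => v x - w x)); try solve_cont; [|apply Sh1_sub_interp_null; auto].
    unfold interp; rewrite ip_lincomb_orth; auto; [ring | solve_cont].
Qed.

End NodalBasis.

(** * The nodal error estimate *)

Lemma bounded_on_01 (f : R -> R) : cont f ->
  exists Q, 0 <= Q /\ forall t, 0 <= t <= 1 -> Rabs (f t) <= Q.
Proof.
  intros Hc; destruct (continuity_ab_maj (fun x => Rabs (f x)) 0 1) as [Mx [HM _]]; [lra| |].
  - intros c _; apply continuity_pt_filterlim, continuous_Rabs_comp, Hc.
  - exists (Rabs (f Mx)); split; [apply Rabs_pos | intros; apply HM; auto].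
Qed.

Lemma sup_norm_bound f : cont f -> (forall x, f (x + 1) = f x) ->
  forall x, Rabs (f x) <= sup_norm f.
Proof.
  intros Hc Hp.
  assert (H01 : forall x, 0 <= x <= 1 -> Rabs (f x) <= sup_norm f).
  { destruct (bounded_on_01 f Hc) as [Q [_ HQ]]; intros x Hx; unfold sup_norm.
    set (Y := fun y => exists x, 0 <= x <= 1 /\ y = Rabs (f x)).
    destruct (Lub_Rbar_correct Y) as [Hub Hlub].
    assert (Hle : Rbar_le (Lub_Rbar Y) Q) by (apply Hlub; intros y [x' [Hx' ->]]; apply HQ; auto).
    assert (Hin : Rbar_le (Rabs (f x)) (Lub_Rbar Y)) by (apply Hub; exists x; auto).
    destruct (Lub_Rbar Y); simpl in *; auto; contradiction. }
  intros x; rewrite <- (periodic_Z f Hp (- Int_part x) x).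
  apply H01; rewrite opp_IZR; destruct (base_Int_part x); lra.
Qed.

Lemma argmax_below (a : nat -> R) n :
  exists j, (j <= n)%nat /\ forall i, (i <= n)%nat -> a i <= a j.
Proof.
  induction n as [|n [j [Hj H]]].
  - exists O; split; auto; intros i Hi; replace i with O by lia; lra.
  - destruct (Rle_or_lt (a (S n)) (a j)).
    + exists j; split; [lia|]; intros i Hi.
      destruct (Nat.eq_dec i (S n)) as [->|]; auto; apply H; lia.
    + exists (S n); split; [lia|]; intros i Hi.
      destruct (Nat.eq_dec i (S n)) as [->|]; [lra|]; specialize (H i ltac:(lia)); lra.
Qed.

Definition taylor_poly (v : R -> R) (k : nat) (a h t : R) : R :=
  sum_f_R0 (fun m => (h * t) ^ m / INR (fact m) * Derive_n v m a) k.

Lemma deg_le_taylor_poly v k a h : deg_le k (taylor_poly v k a h).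
Proof.
  apply (deg_le_ext _ (fun t => sum_f_R0 (fun m => (h ^ m / INR (fact m) * Derive_n v m a) * t ^ m) k));
    [|apply deg_le_sum_pow].
  intros t; apply sum_eq; intros i _; rewrite Rpow_mult_distr; field; apply INR_fact_neq_0.
Qed.

Lemma taylor_poly_0 v k a h : taylor_poly v k a h 0 = v a.
Proof.
  unfold taylor_poly; induction k; [simpl; field|].
  rewrite tech5, IHk; replace ((h * 0) ^ S k) with 0 by (simpl; ring); unfold Rdiv; ring.
Qed.

Lemma taylor_poly_error v k M a h t : 0 < h -> 0 <= t <= 1 ->
  (forall x j, (j <= S k)%nat -> ex_derive_n v j x) ->
  (forall x, Rabs (Derive_n v (S k) x) <= M) ->
  Rabs (v (a + h * t) - taylor_poly v k a h t) <= M * h ^ S k.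
Proof.
  intros Hh Ht Hd HM.
  assert (HM0 : 0 <= M) by (specialize (HM 0); pose proof (Rabs_pos (Derive_n v (S k) 0)); lra).
  assert (Hht : 0 <= h * t <= h) by (split; nra).
  destruct (Req_dec t 0) as [->|Ht0].
  { rewrite taylor_poly_0, Rmult_0_r, Rplus_0_r, Rminus_eq_0, Rabs_R0.
    apply Rmult_le_pos; auto; apply pow_le; lra. }
  destruct (Taylor_Lagrange v k a (a + h * t)) as [zeta [_ Heq]]; [nra | intros; apply Hd; auto|].
  replace (a + h * t - a) with (h * t) in Heq by ring; fold (taylor_poly v k a h t) in Heq.
  rewrite Heq; replace (taylor_poly v k a h t + _ - taylor_poly v k a h t)
    with ((h * t) ^ S k / INR (fact (S k)) * Derive_n v (S k) zeta) by ring.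
  assert (F1 : 1 <= INR (fact (S k))) by (apply (le_INR 1), lt_O_fact).
  assert (P1 : 0 <= (h * t) ^ S k) by (apply pow_le; lra).
  assert (P2 : (h * t) ^ S k <= h ^ S k) by (apply pow_incr; lra).
  assert (P3 : (h * t) ^ S k / INR (fact (S k)) <= h ^ S k).
  { apply (Rle_trans _ ((h * t) ^ S k)); auto.
    apply Rmult_le_reg_r with (INR (fact (S k))); [lra|].
    unfold Rdiv; rewrite Rmult_assoc, Rinv_l by lra; nra. }
  rewrite Rabs_mult, Rabs_right by (apply Rle_ge, Rmult_le_pos; [|apply Rlt_le, Rinv_0_lt_compat]; lra).
  rewrite Rmult_comm; apply Rmult_le_compat; auto using Rabs_pos.
  apply Rmult_le_pos; [|apply Rlt_le, Rinv_0_lt_compat]; lra.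
Qed.

(* Taylor polynomial at [a] plus the linear correction making it exact at [a + h]. *)
Lemma cell_interp_error v k M a h : (1 <= k)%nat -> 0 < h ->
  (forall x j, (j <= S k)%nat -> ex_derive_n v j x) ->
  (forall x, Rabs (Derive_n v (S k) x) <= M) ->
  exists p, deg_le k p /\ p 0 = v a /\ p 1 = v (a + h) /\
    forall t, 0 <= t <= 1 -> Rabs (v (a + h * t) - p t) <= 2 * M * h ^ S k.
Proof.
  intros Hk Hh Hd HM.
  set (T := taylor_poly v k a h).
  set (del := v (a + h * 1) - T 1).
  assert (HB : forall t, 0 <= t <= 1 -> Rabs (v (a + h * t) - T t) <= M * h ^ S k)
    by (intros; apply taylor_poly_error; auto).
  exists (fun t => 1 * T t + del * (t * 1)); repeat split.
  - apply deg_le_lin; [apply deg_le_taylor_poly|].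
    apply (deg_le_mono 1); auto; apply deg_le_mulx, deg_le_const.
  - unfold T; rewrite taylor_poly_0; ring.
  - unfold del; rewrite Rmult_1_r; ring.
  - intros t Ht.
    replace (v (a + h * t) - (1 * T t + del * (t * 1))) with ((v (a + h * t) - T t) + (- t) * del)
      by ring.
    assert (Hd1 : Rabs del <= M * h ^ S k) by (apply HB; lra).
    assert (Ht1 : Rabs (- t) <= 1) by (rewrite Rabs_Ropp, Rabs_right; lra).
    assert (Rabs (- t) * Rabs del <= 1 * (M * h ^ S k))
      by (apply Rmult_le_compat; auto using Rabs_pos).
    eapply Rle_trans; [apply Rabs_triang|]; rewrite Rabs_mult.
    specialize (HB t Ht); lra.
Qed.

Lemma diag_dominant_bound a0 a1 b e e1 e2 : 0 <= a0 + a1 - 2 * Rabs b ->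
  Rabs e1 <= Rabs e -> Rabs e2 <= Rabs e ->
  (a0 + a1 - 2 * Rabs b) * Rabs e <= Rabs (e * a0 + e1 * b + e2 * b + e * a1).
Proof.
  intros Hd H1 H2.
  replace (e * a0 + e1 * b + e2 * b + e * a1) with ((a0 + a1) * e - (- (b * (e1 + e2)))) by ring.
  eapply Rle_trans; [|apply Rabs_triang_inv].
  rewrite Rabs_Ropp, !Rabs_mult, (Rabs_right (a0 + a1)) by (pose proof (Rabs_pos b); lra).
  assert (Rabs (e1 + e2) <= 2 * Rabs e) by (eapply Rle_trans; [apply Rabs_triang | lra]).
  assert (Rabs b * Rabs (e1 + e2) <= Rabs b * (2 * Rabs e))
    by (apply Rmult_le_compat_l; auto using Rabs_pos).
  lra.
Qed.

Section NodalError.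

Variables (n : nat) (phi0 phi1 : R -> R).
Hypothesis Href : ref_pair n phi0 phi1.
Variable N : nat.
Hypothesis HN : (1 <= N)%nat.
Variables (v : R -> R) (M : R).
Hypothesis Hv : Cp v.
Hypothesis Hder : forall x j, (j <= S (S n))%nat -> ex_derive_n v j x.
Hypothesis HM : forall x, Rabs (Derive_n v (S (S n)) x) <= M.

Let Iv := interp phi0 phi1 N v.

Lemma ip_interp_error_cell z phi Q : (z < N)%nat -> cont phi ->
  (forall t, 0 <= t <= 1 -> Rabs (phi t) <= Q) ->
  (forall b, deg_le (S n) b -> b 0 = 0 -> b 1 = 0 -> ip b phi = 0) ->
  Rabs (ip (fun t => v (cell_pt N z t) - Iv (cell_pt N z t)) phi)
  <= 2 * M * (/ INR N) ^ S (S n) * Q.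
Proof.
  intros Hz Cphi HQ Horth; assert (HNp := INR_pos N HN).
  destruct Hv as [Cv Pv].
  destruct (cell_interp_error v (S n) M (node N z) (/ INR N)) as [p (Dp & Ep0 & Ep1 & Ep)];
    auto using Rinv_0_lt_compat; [lia|].
  assert (Ecell : forall t, node N z + / INR N * t = cell_pt N z t)
    by (intros; unfold node, cell_pt; field; lra).
  destruct (cellwise_poly_interp n phi0 phi1 Href N HN v z Hz) as [s [Ds Es]]; fold Iv in Es.
  assert (Hnode : forall i, Iv (node N i) = v (node N i)) by (intros; apply (interp_node n); auto).
  pose proof (cont_deg_le _ _ Dp); pose proof (cont_deg_le _ _ Ds).
  assert (Cvz := cont_comp_cell_pt N z v HN Cv).
  rewrite (ip_ext _ (fun t => 1 * (v (cell_pt N z t) - p t) + 1 * (p t - s t)))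
    by (intros; rewrite Es by lra; ring).
  rewrite ip_lin_l, (Horth (fun t => p t - s t)); try solve_cont.
  - rewrite Rmult_0_r, Rplus_0_r, Rmult_1_l.
    apply (Rle_trans _ ((1 - 0) * (2 * M * (/ INR N) ^ S (S n) * Q))); [|lra].
    apply abs_RInt_le_const; [lra | apply ex_RInt_cont; solve_cont|].
    intros t Ht; rewrite Rabs_mult, <- Ecell.
    apply Rmult_le_compat; auto using Rabs_pos.
  - apply (deg_le_ext _ (fun t => 1 * p t + (-1) * s t)); [intros; ring | apply deg_le_lin; auto].
  - rewrite Ep0, <- Es, cell_pt_0, Hnode by lra; ring.
  - rewrite <- Es, cell_pt_1, Hnode, <- cell_pt_1, <- Ecell, Rmult_1_r, Ep1 by lra; ring.
Qed.

Let E := fun x => pi1 N (S n) v x - Iv x.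

Lemma cont_E : cont E.
Proof.
  destruct (is_pi1_pi1 n phi0 phi1 Href N HN v (proj1 Hv)) as [[Hw _] _].
  pose proof (Vhk_cont _ _ _ Hw); pose proof (cont_interp n phi0 phi1 Href N HN v).
  unfold E, Iv; solve_cont.
Qed.

Lemma ip_E_nodal_basis j : (j < N)%nat ->
  ip E (nodal_basis phi0 phi1 N j) = / INR N *
    (ip (fun t => v (cell_pt N j t) - Iv (cell_pt N j t)) phi0
     + ip (fun t => v (cell_pt N (prev_cell N j) t) - Iv (cell_pt N (prev_cell N j) t)) phi1).
Proof.
  intros Hj; destruct (is_pi1_pi1 n phi0 phi1 Href N HN v (proj1 Hv)) as [[Hw _] Horth].
  pose proof (Vhk_cont _ _ _ Hw); pose proof (proj1 Hv : cont v) as Cv.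
  pose proof (cont_interp n phi0 phi1 Href N HN v) as Ci; fold Iv in Ci.
  pose proof (cont_nodal_basis n phi0 phi1 Href N HN j).
  rewrite (ip_ext _ (fun x => (v x - Iv x) - (v x - pi1 N (S n) v x))) by (intros; unfold E; ring).
  rewrite ip_minus_l, Horth by (solve_cont || apply (nodal_basis_Sh1 n); auto).
  rewrite Rminus_0_r; apply (ip_nodal_basis n); auto; solve_cont.
Qed.

Lemma pi1_nodal_error_scaled Q : (forall t, 0 <= t <= 1 -> Rabs (phi0 t) <= Q /\ Rabs (phi1 t) <= Q) ->
  forall i, (ip phi0 phi0 + ip phi1 phi1 - 2 * Rabs (ip phi0 phi1))
            * Rabs (pi1 N (S n) v (node N i) - v (node N i))
            <= 4 * M * (/ INR N) ^ S (S n) * Q.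
Proof.
  intros HQ i; assert (HNp := INR_pos N HN).
  destruct (is_pi1_pi1 n phi0 phi1 Href N HN v (proj1 Hv)) as [[Hw _] _].
  assert (CE := cont_E).
  assert (PE : forall x, E (x + 1) = E x).
  { intros x; unfold E, Iv; rewrite interp_periodic, (proj2 (proj1 Hw)); auto. }
  assert (DE : cellwise_poly N (S n) E).
  { apply cellwise_poly_minus; [apply Vhk_cellwise_poly; auto | apply (cellwise_poly_interp n); auto]. }
  destruct (argmax_below (fun m => Rabs (E (node N m))) (N - 1)) as [j [Hj Hmax]].
  assert (Hj' : (j < N)%nat) by lia.
  assert (Hall : forall m, Rabs (E (node N m)) <= Rabs (E (node N j))).
  { intros m; rewrite (periodic_node_mod E N m) by auto; apply Hmax.
    pose proof (Nat.mod_upper_bound m N); lia. }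
  assert (Hlocal : E (node N j) * ip phi0 phi0 + E (node N (S j)) * ip phi0 phi1
                   + E (node N (prev_cell N j)) * ip phi0 phi1 + E (node N j) * ip phi1 phi1
                   = ip (fun t => v (cell_pt N j t) - Iv (cell_pt N j t)) phi0
                     + ip (fun t => v (cell_pt N (prev_cell N j) t)
                                    - Iv (cell_pt N (prev_cell N j) t)) phi1).
  { apply (Rmult_eq_reg_l (/ INR N)); [|apply Rinv_neq_0_compat; lra].
    rewrite <- ip_E_nodal_basis, (ip_nodal_basis_cellwise n) by auto.
    rewrite (periodic_node_mod E N (S (prev_cell N j))), succ_prev_cell_mod, (ip_comm phi1 phi0)
      by auto; ring. }
  pose proof (ref_gram_dominant n phi0 phi1 Href) as Hdl.
  assert (Hcell0 := ip_interp_error_cell j phi0 Q Hj' (cont_phi0 _ _ _ Href)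
                      (fun t Ht => proj1 (HQ t Ht)) (ref_orth0 _ _ _ Href)).
  assert (Hcell1 := ip_interp_error_cell (prev_cell N j) phi1 Q (prev_cell_lt N j HN Hj')
                      (cont_phi1 _ _ _ Href) (fun t Ht => proj2 (HQ t Ht)) (ref_orth1 _ _ _ Href)).
  replace (pi1 N (S n) v (node N i) - v (node N i)) with (E (node N i))
    by (unfold E, Iv; rewrite (interp_node n); [ring | auto | auto | apply Hv]).
  apply (Rle_trans _ ((ip phi0 phi0 + ip phi1 phi1 - 2 * Rabs (ip phi0 phi1))
                      * Rabs (E (node N j)))); [apply Rmult_le_compat_l; auto; lra|].
  eapply Rle_trans; [apply diag_dominant_bound; auto; lra|].
  rewrite Hlocal; eapply Rle_trans; [apply Rabs_triang | lra].
Qed.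

End NodalError.

Theorem pi1_nodal_error_bound (n : nat) (v : R -> R) : Cpm (S (S n)) v ->
  exists C : R, 0 < C /\ forall N : nat, (1 <= N)%nat -> forall i : nat, (1 <= i <= N)%nat ->
    Rabs (pi1 N (S n) v (node N i) - v (node N i))
    <= C * (1 / INR N) ^ S (S n) * sup_norm (Derive_n v (S (S n))).
Proof.
  intros [Hv Hder].
  destruct (ref_pair_exists n) as (phi0 & phi1 & Href).
  destruct (bounded_on_01 phi0 (cont_phi0 _ _ _ Href)) as [Q0 [HQ0 BQ0]].
  destruct (bounded_on_01 phi1 (cont_phi1 _ _ _ Href)) as [Q1 [HQ1 BQ1]].
  pose proof (ref_gram_dominant n phi0 phi1 Href) as Hdl.
  set (dl := ip phi0 phi0 + ip phi1 phi1 - 2 * Rabs (ip phi0 phi1)) in Hdl.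
  set (M := sup_norm (Derive_n v (S (S n)))).
  destruct (Hder (S (S n))) as [_ [HDc HDp]]; [lia|].
  assert (HM : forall x, Rabs (Derive_n v (S (S n)) x) <= M) by (apply sup_norm_bound; auto).
  assert (HM0 : 0 <= M) by (specialize (HM 0); pose proof (Rabs_pos (Derive_n v (S (S n)) 0)); lra).
  exists (4 * (Q0 + Q1) / dl + 1); split.
  { assert (0 <= 4 * (Q0 + Q1) / dl) by (apply Rmult_le_pos; [lra | apply Rlt_le, Rinv_0_lt_compat; lra]).
    lra. }
  assert (Hd : forall x j, (j <= S (S n))%nat -> ex_derive_n v j x)
    by (intros x [|j] Hj; [exact I | apply Hder; lia]).
  intros N HN i _; assert (HNp := INR_pos N HN).
  replace (1 / INR N) with (/ INR N) by (field; lra).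
  assert (Hh : 0 <= (/ INR N) ^ S (S n)) by (apply pow_le, Rlt_le, Rinv_0_lt_compat; lra).
  assert (HQ : forall t, 0 <= t <= 1 -> Rabs (phi0 t) <= Q0 + Q1 /\ Rabs (phi1 t) <= Q0 + Q1)
    by (intros t Ht; specialize (BQ0 t Ht); specialize (BQ1 t Ht); lra).
  assert (Herr := pi1_nodal_error_scaled n phi0 phi1 Href N HN v M Hv Hd HM (Q0 + Q1) HQ i).
  fold dl in Herr.
  apply (Rmult_le_reg_l dl); auto.
  apply (Rle_trans _ _ _ Herr).
  replace (dl * ((4 * (Q0 + Q1) / dl + 1) * (/ INR N) ^ S (S n) * M))
    with (4 * M * (/ INR N) ^ S (S n) * (Q0 + Q1) + dl * (M * (/ INR N) ^ S (S n))) by (field; lra).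
  assert (0 <= dl * (M * (/ INR N) ^ S (S n))) by (apply Rmult_le_pos; [lra | apply Rmult_le_pos; auto]).
  lra.
Qed.

Theorem lemma2p6 (kappa : nat) (v : R -> R) :
  Cpm (2 * kappa + 1 + 1) v ->
  exists C : R, 0 < C /\
    forall N : nat, (1 <= N)%nat ->
      forall i : nat, (1 <= i <= N)%nat ->
        Rabs (pi1 N (2 * kappa + 1) v (node N i) - v (node N i))
          <= C * (1 / INR N) ^ (2 * kappa + 1 + 1)
               * sup_norm (Derive_n v (2 * kappa + 1 + 1)).
Proof.
  replace (2 * kappa + 1 + 1)%nat with (S (S (2 * kappa))) by lia.
  replace (2 * kappa + 1)%nat with (S (2 * kappa)) by lia.
  apply pi1_nodal_error_bound.
Qed.
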